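(* For the RHA process and every $j\ge1$, $$\inf_{n\in\mathbb N}2^{-n}H(X^n_j)=h,\qquad\text{where } h:=\inf_{l\in\mathbb N}2^{-l}\log k_l=\lim_{l\to\infty}2^{-l}\log k_l.$$
   Context: Random hierarchical association (RHA) process. Fix positive integers $(k_n)_{n\ge0}$ (perplexities) with $k_{n-1}\le k_n\le k_{n-1}^2$ for all $n\ge1$. On a probability space $(\Omega,\mathcal J,P)$ let, for each $n\ge1$, $(L_{nj},R_{nj})_{j=1}^{k_n}$ be the lexicographically sorted enumeration of a uniformly random $k_n$-element subset of $\{1,\dots,k_{n-1}\}^2$ (each of the $\binom{k_{n-1}^2}{k_n}$ subsets equally likely), independently over $n$. Let $(C_n)_{n\ge0}$ be independent, independent of all $(L_{nj},R_{nj})$, with $C_n$ uniform on $\{1,\dots,k_n\}$. Define strings $Y^0_j=j$ (length 1) for $1\le j\le k_0$ and $Y^n_j=Y^{n-1}_{L_{nj}}Y^{n-1}_{R_{nj}}$ (concatenation). The RHA process is $\mathcal X=Y^0_{C_0}Y^1_{C_1}Y^2_{C_2}\cdots=X_1X_2X_3\cdots$, $X_{k:l}=X_k\cdots X_l$; for $n\ge0$, $j\ge1$, $X^n_j=X_{j2^n:(j+1)2^n-1}$. $H(X)=\mathbb E_P[-\log P(X)]$ with natural logarithm. The quantity $h$ is called the combinatorial entropy rate. *)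

From Stdlib Require Import Reals.
From mathcomp Require Import all_boot.
Set Implicit Arguments.
Unset Strict Implicit.
Unset Printing Implicit Defensive.

Definition lexle (p q : nat * nat) : bool :=
  (p.1 < q.1) || ((p.1 == q.1) && (p.2 <= q.2)).

Definition lexenum (a : nat) (A : {set 'I_a * 'I_a}) : seq (nat * nat) :=
  sort lexle [seq (nat_of_ord x.1, nat_of_ord x.2) | x <- enum A].

(* Level i >= 1: all k_i-element subsets of {0..k_{i-1}-1}^2 (one list entry
   per subset, so the uniform weight on entries = uniform law on subsets),
   each given by its lexicographically sorted enumeration (L_ij, R_ij)_j. *)
Definition level_outcomes (k : nat -> nat) (i : nat) : seq (seq (nat * nat)) :=
  [seq lexenum A | A <- enum [set A : {set 'I_(k i.-1) * 'I_(k i.-1)} | #|A| == k i]].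

Definition prod_lists (A : Type) (ls : seq (seq A)) : seq (seq A) :=
  foldr (fun l acc => [seq x :: y | x <- l, y <- acc]) [:: [::]] ls.

(* An outcome of the process truncated at level M:
   (list of level-1..M enumerations, list of C_0..C_M). *)
Definition outcome := (seq (seq (nat * nat)) * seq nat)%type.

(* Finite product sample space, uniform (each entry equally likely). *)
Definition Omega (k : nat -> nat) (M : nat) : seq outcome :=
  [seq (s, c) | s <- prod_lists [seq level_outcomes k i | i <- iota 1 M],
                c <- prod_lists [seq iota 0 (k i) | i <- iota 0 M.+1]].

(* Y^n_j (0-based index j, symbols 0..k_0-1); Ls = level-1,2,... data. *)
Fixpoint Ystr (Ls : seq (seq (nat * nat))) (n j : nat) : seq nat :=
  match n with
  | 0 => [:: j]
  | n'.+1 => let p := nth (0, 0) (nth [::] Ls n') j in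
             Ystr Ls n' p.1 ++ Ystr Ls n' p.2
  end.

(* X_{1 : 2^(M+1)-1} = Y^0_{C_0} Y^1_{C_1} ... Y^M_{C_M}. *)
Definition Xprefix (M : nat) (w : outcome) : seq nat :=
  flatten [seq Ystr w.1 i (nth 0 w.2 i) | i <- iota 0 M.+1].

(* X^n_j = X_{j 2^n : (j+1) 2^n - 1} (1-based positions t, entry t-1). *)
Definition Xblock (M n j : nat) (w : outcome) : seq nat :=
  [seq nth 0 (Xprefix M w) t.-1 | t <- iota (j * 2 ^ n) (2 ^ n)].

(* H(X) = E[-log P(X)] for X = f on the uniform finite space Om. *)
Definition entropy (A : eqType) (Om : seq outcome) (f : outcome -> A) : R :=
  foldr Rplus R0 [seq
     Rmult (Rinv (INR (size Om)))
       (Ropp (ln (Rdiv (INR (count (fun w' => f w' == f w) Om)) (INR (size Om)))))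
   | w <- Om].

(* H(X^n_j): its law is computed on the truncation at level M = n + j,
   which contains the whole block since (j+1) 2^n <= 2^(n+j+1). *)
Definition H_block (k : nat -> nat) (n j : nat) : R :=
  entropy (Omega k (n + j)) (Xblock (n + j) n j).

Definition is_inf (E : R -> Prop) (m : R) : Prop :=
  (forall x, E x -> Rle m x) /\
  (forall b, (forall x, E x -> Rle b x) -> Rle b m).

(* Let [a_l = ln k_l / 2^l]. Since [k_(l+1) <= k_l^2], the sequence [a_l]
   decreases and converges to its infimum [h].
   Lower bound: [X^n_j] is the word [Y^n_d] for an index [d] that is uniform
   on the [k_n] words of level [n], because choosing a uniform pair of a
   uniform level and moving to one of its components keeps an index uniform.
   The words of a level are pairwise distinct, so every value of [X^n_j] has
   probability at most [1 / k_n]; hence [H(X^n_j) >= ln k_n] and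
   [2^-n H(X^n_j) >= a_n >= h].
   Upper bound: [X^(m+t)_j] is a function of the first [m] levels and of the
   [2^t] level-[m] indices of its sub-blocks, so
   [H(X^(m+t)_j) <= C_m + 2^t ln k_m], where [C_m] is the log of the number
   of outcomes of the first [m] levels. Dividing by [2^(m+t)] and letting [t]
   grow shows that any lower bound of the block rates is at most [a_m], for
   every [m], hence at most [h]. *)

From HB Require Import structures.
From Stdlib Require Import Reals Lra.
From mathcomp Require Import all_boot perm zify.

Set Implicit Arguments.
Unset Strict Implicit.

Lemma size_undup_map_gt0 (T U : eqType) (f : T -> U) (s : seq T) :
  0 < size s -> 0 < size (undup (map f s)).
Proof.
case: s => // x s _; rewrite -has_predT; apply/hasP; exists (f x) => //.
by rewrite mem_undup map_f ?mem_head.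
Qed.

Lemma sum_nat_const_seq (T : Type) (s : seq T) (c : nat) :
  \sum_(x <- s) c = size s * c.
Proof. by rewrite big_const_seq count_predT iter_addn_0 mulnC. Qed.

Lemma count_sum_nat (T : Type) (P : pred T) (s : seq T) :
  count P s = \sum_(x <- s) (P x : nat).
Proof. by rewrite -sum1_count big_mkcond. Qed.

Section ProdLists.

Variable T : Type.
Implicit Types (s l : seq T) (As Bs Ls : seq (seq T)).

Lemma prod_lists_cons l Ls :
  prod_lists (l :: Ls) = [seq x :: y | x <- l, y <- prod_lists Ls].
Proof. by []. Qed.

Lemma size_prod_lists Ls : size (prod_lists Ls) = \prod_(l <- Ls) size l.
Proof.
elim: Ls => [|l Ls IH]; first by rewrite big_nil.
by rewrite prod_lists_cons size_allpairs big_cons IH.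
Qed.

Lemma size_prod_lists_cat As Bs :
  size (prod_lists (As ++ Bs)) = size (prod_lists As) * size (prod_lists Bs).
Proof. by rewrite !size_prod_lists big_cat. Qed.

Lemma size_prod_lists_nseq a l : size (prod_lists (nseq a l)) = size l ^ a.
Proof. by elim: a => [|a IH] //=; rewrite size_allpairs IH expnS. Qed.

Lemma big_prod_lists_cat As Bs (F : seq T -> nat) :
  \sum_(s <- prod_lists (As ++ Bs)) F s =
  \sum_(a <- prod_lists As) \sum_(b <- prod_lists Bs) F (a ++ b).
Proof.
elim: As F => [|l As IH] F; first by rewrite /= big_cons big_nil addn0.
rewrite cat_cons !prod_lists_cons !big_allpairs_dep.
by apply: eq_bigr => x _; rewrite IH.
Qed.

Lemma big_prod_lists_nth Ls (G : T -> nat) x0 i : i < size Ls ->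
  (\sum_(c <- prod_lists Ls) G (nth x0 c i)) * size (nth [::] Ls i) =
  size (prod_lists Ls) * \sum_(x <- nth [::] Ls i) G x.
Proof.
elim: Ls i => [|l Ls IH] [|i] //= iL; rewrite big_allpairs_dep /= size_allpairs.
  under eq_bigr do rewrite sum_nat_const_seq.
  by rewrite -big_distrr /= mulnC mulnA [size l * _]mulnC.
by rewrite sum_nat_const_seq -mulnA IH // mulnA.
Qed.

End ProdLists.

Section ProdListsEq.

Variable T : eqType.
Implicit Types (s l : seq T) (As Bs Ls : seq (seq T)).

Lemma prod_listsP Ls s x0 :
  reflect (size s = size Ls /\ forall i, i < size Ls -> nth x0 s i \in nth [::] Ls i)
          (s \in prod_lists Ls).
Proof.
elim: Ls s => [|l Ls IH] s.
  apply: (iffP idP) => [|[size_s _]]; first by rewrite inE => /eqP ->.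
  by case: s size_s.
rewrite prod_lists_cons; apply: (iffP allpairsP).
  move=> [[x y] /= [x_in /IH [size_y y_in] ->]].
  by split => [|[|i] //= /y_in]; rewrite /= ?size_y.
case: s => [|x y] [/= size_s s_in] //.
exists (x, y); split => //=; first exact: (s_in 0).
by apply/IH; split => [|i i_lt]; [case: size_s | exact: (s_in i.+1)].
Qed.

Lemma prod_lists_take As Bs s :
  s \in prod_lists (As ++ Bs) -> take (size As) s \in prod_lists As.
Proof.
elim: As s => [|l As IH] s /=; first by rewrite take0 inE.
move=> /allpairsP [[x y] /= [xl yin ->]] /=.
by apply/allpairsP; exists (x, take (size As) y); split => //; apply: IH.
Qed.

Lemma size_prod_lists_gt0 Ls :
  (forall l, l \in Ls -> 0 < size l) -> 0 < size (prod_lists Ls).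
Proof.
move=> Ls_gt0; rewrite size_prod_lists big_seq.
by apply: (big_ind (fun n => 0 < n)) => // m n m_gt0 n_gt0; rewrite muln_gt0 m_gt0.
Qed.

End ProdListsEq.

Definition pair_val a (x : 'I_a * 'I_a) : nat * nat := (nat_of_ord x.1, nat_of_ord x.2).

Lemma pair_val_inj a : injective (@pair_val a).
Proof. by move=> [x1 x2] [y1 y2] [] /val_inj -> /val_inj ->. Qed.

Lemma perm_lexenum a (A : {set 'I_a * 'I_a}) :
  perm_eq (lexenum A) (map (@pair_val a) (enum A)).
Proof. by rewrite /lexenum perm_sort. Qed.

Definition level_ok (a b : nat) (l : seq (nat * nat)) :=
  [/\ uniq l, size l = b & all (fun p => (p.1 < a) && (p.2 < a)) l].

Lemma lexenum_ok a (A : {set 'I_a * 'I_a}) : level_ok a #|A| (lexenum A).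
Proof.
have P := perm_lexenum A; split.
- by rewrite (perm_uniq P) map_inj_uniq ?enum_uniq //; exact: pair_val_inj.
- by rewrite (perm_size P) size_map cardE.
- by rewrite (perm_all _ P) all_map; apply/allP => x _ /=; rewrite !ltn_ord.
Qed.

Lemma level_outcomes_ok k i l :
  l \in level_outcomes k i -> level_ok (k i.-1) (k i) l.
Proof.
by move=> /mapP [A]; rewrite mem_enum inE => /eqP <- ->; exact: lexenum_ok.
Qed.

Lemma size_level_outcomes k i :
  size (level_outcomes k i) = 'C(k i.-1 * k i.-1, k i).
Proof. by rewrite size_map -cardE card_draws card_prod card_ord. Qed.

Lemma size_level_outcomes_gt0 k i : k i <= k i.-1 * k i.-1 ->
  0 < size (level_outcomes k i).
Proof. by rewrite size_level_outcomes bin_gt0. Qed.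

Section UniformLevel.

Variables (T : finType) (K : nat).

Let draws := [set A : {set T} | #|A| == K].
Let draws_with (x : T) := \sum_(A in draws) (x \in A : nat).

(* The transposition of [x] and [y] permutes the draws. *)
Lemma draws_with_const x y : draws_with x = draws_with y.
Proof.
rewrite /draws_with (reindex_inj (imset_inj (@perm_inj _ (tperm x y)))) /=.
apply: eq_big => A; first by rewrite !inE card_imset //; exact: perm_inj.
by move=> _; rewrite -{1}(tpermR x y) mem_imset //; exact: perm_inj.
Qed.

(* Double counting: a uniformly drawn [K]-subset covers each point equally often. *)
Lemma sum_draws (F : T -> nat) (x0 : T) :
  (\sum_(A in draws) \sum_(x in A) F x) * #|T| = #|draws| * K * \sum_x F x.
Proof.
have sum_in (G : T -> nat) (A : {set T}) :
    \sum_(x in A) G x = \sum_x (x \in A : nat) * G x.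
  by rewrite big_mkcond /=; apply: eq_bigr => x _; case: (x \in A); rewrite ?mul1n.
have -> : \sum_(A in draws) \sum_(x in A) F x = draws_with x0 * \sum_x F x.
  under eq_bigr do rewrite sum_in.
  rewrite exchange_big big_distrr /=; apply: eq_bigr => x _.
  by rewrite -big_distrl -/(draws_with x) (draws_with_const x x0).
have -> : #|draws| * K = #|T| * draws_with x0.
  rewrite -sum_nat_const (eq_bigr (fun A : {set T} => #|A|)); last by move=> A; rewrite inE => /eqP.
  under eq_bigr do rewrite -sum1_card (sum_in (fun=> 1)).
  rewrite exchange_big /= -sum_nat_const; apply: eq_bigr => x _.
  by rewrite -(draws_with_const x x0); apply: eq_bigr => A _; rewrite muln1.
by rewrite mulnC mulnA.
Qed.

End UniformLevel.

Definition child (b : bool) (p : nat * nat) : nat := if b then p.2 else p.1.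

Lemma sum_pairs_child a b (G : nat -> nat) :
  \sum_(x : 'I_a * 'I_a) G (child b (pair_val x)) = a * \sum_(y <- iota 0 a) G y.
Proof.
rewrite -(pair_big xpredT xpredT (fun x y : 'I_a => G (child b (pair_val (x, y))))) /=.
have -> : \sum_(y <- iota 0 a) G y = \sum_(y < a) G y.
  by rewrite -(big_mkord xpredT) /index_iota subn0.
rewrite big_distrr /=.
case: b; first rewrite exchange_big /=.
all: by apply: eq_bigr => y _; rewrite /= sum_nat_const card_ord.
Qed.

(* The child of a uniformly chosen pair of a uniform level is uniform on the previous level. *)
Lemma sum_level_child k i b (G : nat -> nat) : 0 < k i.-1 ->
  (\sum_(l <- level_outcomes k i) \sum_(y <- iota 0 (k i)) G (child b (nth (0, 0) l y)))
    * k i.-1 =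
  size (level_outcomes k i) * k i * \sum_(x <- iota 0 (k i.-1)) G x.
Proof.
set a := k i.-1 => a_gt0; set H := fun x : 'I_a * 'I_a => G (child b (pair_val x)).
have sum_lexenum (A : {set 'I_a * 'I_a}) : #|A| = k i ->
    \sum_(y <- iota 0 (k i)) G (child b (nth (0, 0) (lexenum A) y)) = \sum_(x in A) H x.
  have [_ sz _] := lexenum_ok A => cA.
  rewrite -(big_enum _ _ A) /H -(big_map (@pair_val a) xpredT (fun p => G (child b p))).
  by rewrite -(perm_big _ (perm_lexenum A)) (big_nth (0, 0)) sz cA /index_iota subn0.
have := sum_draws (k i) H (Ordinal a_gt0, Ordinal a_gt0).
rewrite sum_pairs_child card_prod card_ord size_map -cardE big_map big_enum /=.
move=> E; rewrite (eq_bigr (fun A : {set _} => \sum_(x in A) H x)); last first.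
  by move=> A; rewrite inE => /eqP/sum_lexenum.
apply/eqP; rewrite -(eqn_pmul2r a_gt0) -mulnA E.
by rewrite [a * _]mulnC mulnA.
Qed.

Fixpoint low_bits (m r : nat) : seq bool :=
  if m is m'.+1 then odd r :: low_bits m' r./2 else [::].

Lemma size_low_bits m r : size (low_bits m r) = m.
Proof. by elim: m r => [|m IH] r //=; rewrite IH. Qed.

Lemma dyadic_split j : 0 < j ->
  exists m r, [/\ j = 2 ^ m + r, r < 2 ^ m & m <= j].
Proof.
move=> j_gt0; have /andP [lo hi] := trunc_log_bounds (isT : 1 < 2) j_gt0.
exists (trunc_log 2 j), (j - 2 ^ trunc_log 2 j); split; first lia.
- by move: hi; rewrite expnS; lia.
- exact: leq_trans (ltnW (ltn_expl _ (isT : 1 < 2))) lo.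
Qed.

(* [descend bits s c] starts from word [c] of level [size bits] and steps down
   to level 0, taking at level [i + 1] (i.e. in [nth [::] s i]) the child
   selected by the [i]-th bit. *)
Fixpoint descend (bits : seq bool) (s : seq (seq (nat * nat))) (c : nat) : nat :=
  if bits is b :: bs then child b (nth (0, 0) (head [::] s) (descend bs (behead s) c))
  else c.

Lemma size_Ystr Ls n j : size (Ystr Ls n j) = 2 ^ n.
Proof. by elim: n j => [|n IH] j //=; rewrite size_cat !IH expnS mul2n addnn. Qed.

Lemma eq_Ystr Ls Ls' n j : (forall i, i < n -> nth [::] Ls i = nth [::] Ls' i) ->
  Ystr Ls n j = Ystr Ls' n j.
Proof.
elim: n j => [|n IH] j eqL //=.
by rewrite eqL // !IH // => i /ltnW; exact: eqL.
Qed.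

Lemma head_behead_drop (T : Type) (s : seq (seq T)) n :
  head [::] (drop n s) = nth [::] s n /\ behead (drop n s) = drop n.+1 s.
Proof. by elim: s n => [|a s IH] [|n] //=; rewrite drop0. Qed.

(* Position [r 2^n + q] of a level-[(n + m)] word lies in its [r]-th sub-word of level [n]. *)
Lemma nth_Ystr_descend Ls m n r q c : r < 2 ^ m -> q < 2 ^ n ->
  nth 0 (Ystr Ls (n + m) c) (r * 2 ^ n + q) =
  nth 0 (Ystr Ls n (descend (low_bits m r) (drop n Ls) c)) q.
Proof.
elim: m n r q c => [|m IH] n r q c r_lt q_lt.
  by move: r_lt; rewrite expn0 ltnS leqn0 => /eqP ->; rewrite addn0.
have E : r * 2 ^ n + q = r./2 * 2 ^ n.+1 + (odd r * 2 ^ n + q).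
  by rewrite -{1}(odd_double_half r) expnS; lia.
have r2_lt : r./2 < 2 ^ m by move: r_lt; rewrite expnS -{1}(odd_double_half r); lia.
have q2_lt : odd r * 2 ^ n + q < 2 ^ n.+1 by rewrite expnS; case: (odd r) => /=; lia.
rewrite addnS -addSn E IH //=.
have [-> ->] := head_behead_drop Ls n; rewrite nth_cat size_Ystr.
case: (odd r) => /=; first by rewrite mul1n ltnNge leq_addr /= addKn.
by rewrite mul0n add0n q_lt.
Qed.

Lemma Ystr_descend_blocks Ls m t d :
  Ystr Ls (m + t) d =
  mkseq (fun x => nth 0 (Ystr Ls m (descend (low_bits t (x %/ 2 ^ m)) (drop m Ls) d))
                       (x %% 2 ^ m))
        (2 ^ (m + t)).
Proof.
rewrite -[LHS](mkseq_nth 0) size_Ystr; apply/eq_in_map => x.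
rewrite mem_iota add0n expnD => /andP [_ x_lt] /=.
have pow_gt0 : 0 < 2 ^ m by rewrite expn_gt0.
by rewrite {1}(divn_eq x (2 ^ m)) nth_Ystr_descend ?ltn_pmod // ltn_divLR // mulnC.
Qed.

Lemma sumn_pow2 i : sumn [seq 2 ^ i' | i' <- iota 0 i] = (2 ^ i).-1.
Proof.
elim: i => [|i IH] //; rewrite -[i.+1]addn1 iotaD map_cat sumn_cat IH /=.
by rewrite add0n addn0 expnD expn1; have := expn_gt0 2 i; lia.
Qed.

(* The word chosen at level [i] occupies positions [2^i .. 2^(i+1) - 1] of [X]. *)
Lemma nth_Xprefix M w i q : i <= M -> q < 2 ^ i ->
  nth 0 (Xprefix M w) ((2 ^ i).-1 + q) = nth 0 (Ystr w.1 i (nth 0 w.2 i)) q.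
Proof.
move=> iM q_lt; rewrite /Xprefix (_ : M.+1 = i + (M - i).+1); last by lia.
rewrite iotaD map_cat flatten_cat nth_cat.
have -> : size (flatten [seq Ystr w.1 i' (nth 0 w.2 i') | i' <- iota 0 i]) = (2 ^ i).-1.
  rewrite size_flatten /shape -map_comp -sumn_pow2; congr sumn.
  by apply: eq_map => x /=; rewrite size_Ystr.
by rewrite ltnNge leq_addr /= addKn add0n /= nth_cat size_Ystr q_lt.
Qed.

Lemma Xblock_descend M n m r w : r < 2 ^ m -> n + m <= M ->
  Xblock M n (2 ^ m + r) w =
  Ystr w.1 n (descend (low_bits m r) (drop n w.1) (nth 0 w.2 (n + m))).
Proof.
move=> r_lt nmM; rewrite /Xblock -[RHS](mkseq_nth 0) size_Ystr /mkseq.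
rewrite -[in iota _ _](addn0 ((2 ^ m + r) * 2 ^ n)) iotaDl -map_comp.
apply/eq_in_map => q; rewrite mem_iota add0n => /andP [_ q_lt] /=.
have -> : ((2 ^ m + r) * 2 ^ n + q).-1 = (2 ^ (n + m)).-1 + (r * 2 ^ n + q).
  by rewrite expnD mulnDl (mulnC (2 ^ m)); have := expn_gt0 2 (n + m); rewrite expnD; lia.
rewrite nth_Xprefix ?nth_Ystr_descend // expnD (mulnC (2 ^ n)).
apply: (@leq_trans (r.+1 * 2 ^ n)); first by rewrite mulSn; lia.
by rewrite leq_mul2r r_lt orbT.
Qed.

Lemma descend_lt k bits n s c :
  (forall i, i < size bits ->
     all (fun p => (p.1 < k (n + i)) && (p.2 < k (n + i))) (nth [::] s i)) ->
  0 < k n -> c < k (n + size bits) -> descend bits s c < k n.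
Proof.
case: bits => [|b bs] s_ok k_gt0 c_lt /=; first by rewrite addn0 in c_lt.
set d := descend _ _ _; have [d_lt|d_ge] := ltnP d (size (head [::] s)).
  have : nth (0, 0) (head [::] s) d \in nth [::] s 0.
    by case: (s) d_lt => [|l s'] //= d_lt; rewrite mem_nth.
  by move/(allP (s_ok 0 isT)); rewrite addn0 => /andP []; case: (b).
by rewrite nth_default //; case: (b).
Qed.

Lemma Ystr_inj k Ls n : (forall i, i < n -> level_ok (k i) (k i.+1) (nth [::] Ls i)) ->
  {in gtn (k n) &, injective (Ystr Ls n)}.
Proof.
elim: n => [|n IH] Ls_ok y y' y_lt y'_lt /=; first by case.
have [l_uniq l_size l_all] := Ls_ok n (ltnSn n).
have Ls_ok' i : i < n -> level_ok (k i) (k i.+1) (nth [::] Ls i).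
  by move=> /ltnW; exact: Ls_ok.
move/eqP; rewrite eqseq_cat ?size_Ystr // => /andP [/eqP eq_fst /eqP eq_snd].
have children_lt z : z < k n.+1 ->
    (nth (0, 0) (nth [::] Ls n) z).1 < k n /\ (nth (0, 0) (nth [::] Ls n) z).2 < k n.
  move=> z_lt; have : nth (0, 0) (nth [::] Ls n) z \in nth [::] Ls n by rewrite mem_nth ?l_size.
  by move/(allP l_all)/andP.
have [a1 a2] := children_lt y y_lt; have [b1 b2] := children_lt y' y'_lt.
apply/eqP; rewrite -(nth_uniq (0, 0) _ _ l_uniq) ?l_size //; apply/eqP.
have := IH Ls_ok' _ _ a1 b1 eq_fst; have := IH Ls_ok' _ _ a2 b2 eq_snd.
by case: (nth _ _ y) => ? ?; case: (nth _ _ y') => ? ? /= -> ->.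
Qed.

Section Counting.

Variable k : nat -> nat.
Hypothesis k_gt0 : forall n, 0 < k n.
Hypothesis k_sq : forall n, k n.+1 <= k n * k n.

Definition level_lists n p := [seq level_outcomes k i | i <- iota n.+1 p].
Definition choice_lists M := [seq iota 0 (k i) | i <- iota 0 M.+1].

Lemma level_lists_cat n p q :
  level_lists n (p + q) = level_lists n p ++ level_lists (n + p) q.
Proof. by rewrite /level_lists iotaD map_cat addSn. Qed.

Lemma nth_level_lists n p i : i < p -> nth [::] (level_lists n p) i = level_outcomes k (n + i).+1.
Proof. by move=> i_lt; rewrite (nth_map 0) ?size_iota // nth_iota // addSn. Qed.

Lemma nth_choice_lists M i : i <= M -> nth [::] (choice_lists M) i = iota 0 (k i).
Proof. by move=> iM; rewrite (nth_map 0) ?size_iota // nth_iota. Qed.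

Lemma big_Omega M (F : outcome -> nat) :
  \sum_(w <- Omega k M) F w =
  \sum_(s <- prod_lists (level_lists 0 M)) \sum_(c <- prod_lists (choice_lists M)) F (s, c).
Proof. exact: big_allpairs. Qed.

Lemma size_Omega M :
  size (Omega k M) = size (prod_lists (level_lists 0 M)) * size (prod_lists (choice_lists M)).
Proof. exact: size_allpairs. Qed.

Lemma size_prod_level_lists_gt0 n p : 0 < size (prod_lists (level_lists n p)).
Proof.
apply: size_prod_lists_gt0 => _ /mapP [[|i] /[!mem_iota] // _ ->].
exact: size_level_outcomes_gt0 (k_sq i).
Qed.

Lemma size_Omega_gt0 M : 0 < size (Omega k M).
Proof.
rewrite size_Omega muln_gt0 size_prod_level_lists_gt0.
by apply: size_prod_lists_gt0 => _ /mapP [i _ ->]; rewrite size_iota.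
Qed.

Lemma Omega_ok M w : w \in Omega k M ->
  [/\ w.1 \in prod_lists (level_lists 0 M),
      forall i, i < M -> level_ok (k i) (k i.+1) (nth [::] w.1 i)
    & forall i, i <= M -> nth 0 w.2 i < k i].
Proof.
move=> /allpairsP [[s c] [s_in c_in ->]]; split => // i iM.
  have [_ /(_ i)] := elimT (prod_listsP _ _ [::]) s_in.
  by rewrite size_map size_iota nth_level_lists // => /(_ iM) /level_outcomes_ok.
have [_ /(_ i)] := elimT (prod_listsP _ _ 0) c_in.
by rewrite size_map size_iota nth_choice_lists // mem_iota => /(_ iM).
Qed.

Lemma descend_Omega_lt M w bits n c : w \in Omega k M -> n + size bits <= M ->
  c < k (n + size bits) -> descend bits (drop n w.1) c < k n.
Proof.
case/Omega_ok => _ w_ok _ le_M; apply: descend_lt => // i i_lt.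
by rewrite nth_drop; have [] := w_ok (n + i) ltac:(lia).
Qed.

(* Descending from a uniform index through uniform levels yields a uniform index. *)
Lemma sum_descend bits n p (G : nat -> nat) : size bits <= p ->
  (\sum_(s <- prod_lists (level_lists n p))
     \sum_(c <- iota 0 (k (n + size bits))) G (descend bits s c)) * k n =
  size (prod_lists (level_lists n p)) * k (n + size bits) * \sum_(x <- iota 0 (k n)) G x.
Proof.
elim: bits n p G => [|b bs IH] n p G.
  by move=> _ /=; rewrite addn0 sum_nat_const_seq mulnAC.
case: p => [|p] //; rewrite ltnS => bs_le.
rewrite (_ : level_lists n p.+1 = level_outcomes k n.+1 :: level_lists n.+1 p) //.
rewrite prod_lists_cons big_allpairs_dep size_allpairs /= addnS -addSn.
set G' := fun y => \sum_(l <- level_outcomes k n.+1) G (child b (nth (0, 0) l y)).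
have -> : \sum_(l <- level_outcomes k n.+1) \sum_(s <- prod_lists (level_lists n.+1 p))
    \sum_(c <- iota 0 (k (n.+1 + size bs))) G (child b (nth (0, 0) l (descend bs s c)))
  = \sum_(s <- prod_lists (level_lists n.+1 p))
      \sum_(c <- iota 0 (k (n.+1 + size bs))) G' (descend bs s c).
  by rewrite exchange_big; apply: eq_bigr => s _; rewrite exchange_big.
have level := @sum_level_child k n.+1 b G (k_gt0 n).
have IHn := IH n.+1 p G' bs_le.
have sum_G' : \sum_(y <- iota 0 (k n.+1)) G' y =
    \sum_(l <- level_outcomes k n.+1) \sum_(y <- iota 0 (k n.+1)) G (child b (nth (0, 0) l y)).
  exact: exchange_big.
rewrite sum_G' in IHn.
apply/eqP; rewrite -(eqn_pmul2r (k_gt0 n.+1)) mulnAC IHn -!mulnA level; apply/eqP.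
set S := size _; set L := size _; set U := \sum_(x <- _) _; lia.
Qed.

Lemma sum_choice_descend bits n j (G : nat -> nat) : size bits <= j ->
  (\sum_(s <- prod_lists (level_lists n j))
     \sum_(c <- prod_lists (choice_lists (n + j))) G (descend bits s (nth 0 c (n + size bits))))
    * k n =
  size (prod_lists (level_lists n j)) * size (prod_lists (choice_lists (n + j)))
    * \sum_(x <- iota 0 (k n)) G x.
Proof.
move=> bits_le; set m := size bits; set C := choice_lists (n + j).
have m_lt : n + m < size C by rewrite size_map size_iota; lia.
have := big_prod_lists_nth (fun x => \sum_(s <- prod_lists (level_lists n j)) G (descend bits s x)) 0 m_lt.
rewrite nth_choice_lists ?size_iota; last by lia.
rewrite exchange_big /= => marginal.
apply/eqP; rewrite -(eqn_pmul2r (k_gt0 (n + m))) mulnAC marginal exchange_big /=.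
rewrite -mulnA sum_descend //; apply/eqP.
by rewrite -/m; lia.
Qed.

Lemma count_Ystr_le1 Ls n v :
  (forall i, i < n -> level_ok (k i) (k i.+1) (nth [::] Ls i)) ->
  count (fun y => Ystr Ls n y == v) (iota 0 (k n)) <= 1.
Proof.
move=> Ls_ok; rewrite -(count_map _ (pred1 v)) count_uniq_mem ?leq_b1 //.
rewrite map_inj_in_uniq ?iota_uniq // => y y'.
by rewrite !mem_iota => /andP [_ y_lt] /andP [_ y'_lt]; apply: (Ystr_inj Ls_ok).
Qed.

Lemma count_Xblock_le n j v : 0 < j ->
  count (fun w => Xblock (n + j) n j w == v) (Omega k (n + j)) * k n <= size (Omega k (n + j)).
Proof.
move=> /dyadic_split [m [r [-> r_lt m_le]]].
set bits := low_bits m r; have size_bits : size bits = m by exact: size_low_bits.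
have split_levels : level_lists 0 (n + (2 ^ m + r)) = level_lists 0 n ++ level_lists n (2 ^ m + r).
  by rewrite level_lists_cat add0n.
rewrite count_sum_nat big_Omega size_Omega split_levels big_prod_lists_cat size_prod_lists_cat.
rewrite big_distrl /= -mulnA -sum_nat_const_seq big_seq [X in _ <= X]big_seq.
apply: leq_sum => s1 s1_in.
have [size_s1 s1_ok] := elimT (prod_listsP _ _ [::]) s1_in; rewrite size_map size_iota in size_s1 s1_ok.
set G := fun y => (Ystr s1 n y == v : nat).
have Xblock_s1 s2 c : Xblock (n + (2 ^ m + r)) n (2 ^ m + r) (s1 ++ s2, c) =
    Ystr s1 n (descend bits s2 (nth 0 c (n + size bits))).
  rewrite Xblock_descend ?size_bits //=; last by lia.
  by rewrite drop_size_cat //; apply: eq_Ystr => i i_lt; rewrite nth_cat size_s1 i_lt.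
under eq_bigr do under eq_bigr do rewrite Xblock_s1 -/(G _).
rewrite -(leq_pmul2r (k_gt0 n)) mulnAC sum_choice_descend ?size_bits //.
have G_le1 : \sum_(x <- iota 0 (k n)) G x <= 1.
  rewrite /G -count_sum_nat count_Ystr_le1 // => i i_lt.
  by have := s1_ok i i_lt; rewrite nth_level_lists // add0n => /level_outcomes_ok.
apply: leq_trans (leq_mul (leq_mul (leqnn _) G_le1) (leqnn _)) _.
by rewrite muln1 mulnAC.
Qed.

(* [X^(m+t)_j] is determined by the first [m] levels and [2^t] indices at level [m]. *)
Lemma size_undup_Xblock_le j m t : 0 < j ->
  size (undup (map (Xblock (m + t + j) (m + t) j) (Omega k (m + t + j)))) <=
  size (prod_lists (level_lists 0 m)) * k m ^ (2 ^ t).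
Proof.
move=> /dyadic_split [e [r [-> r_lt e_le]]]; set n := m + t; set M := n + (2 ^ e + r).
set d := fun w : outcome => descend (low_bits e r) (drop n w.1) (nth 0 w.2 (n + e)).
set code := fun w : outcome => (take m w.1,
  [seq descend (low_bits t q) (drop m w.1) (d w) | q <- iota 0 (2 ^ t)]).
set decode := fun p : seq (seq (nat * nat)) * seq nat =>
  mkseq (fun x => nth 0 (Ystr p.1 m (nth 0 p.2 (x %/ 2 ^ m))) (x %% 2 ^ m)) (2 ^ n).
have factor w : Xblock M n (2 ^ e + r) w = decode (code w).
  rewrite Xblock_descend //; last by lia.
  rewrite -/(d w) Ystr_descend_blocks /decode /code /mkseq /=.
  apply/eq_in_map => x; rewrite mem_iota add0n expnD => /andP [_ x_lt].
  have q_lt : x %/ 2 ^ m < 2 ^ t by rewrite ltn_divLR ?expn_gt0 // mulnC.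
  rewrite (nth_map 0) ?size_iota // nth_iota // add0n.
  by congr nth; apply: eq_Ystr => i i_lt; rewrite nth_take.
set codes := [seq (a, b) | a <- prod_lists (level_lists 0 m),
                          b <- prod_lists (nseq (2 ^ t) (iota 0 (k m)))].
have code_in w : w \in Omega k M -> code w \in codes.
  move=> w_in; apply/allpairsP; exists (code w); split => //=.
    case/Omega_ok: w_in => + _ _; rewrite /M (_ : n + _ = m + (t + (2 ^ e + r))); last by lia.
    by rewrite level_lists_cat => /prod_lists_take; rewrite size_map size_iota.
  apply/(prod_listsP _ _ 0); rewrite size_map size_iota size_nseq; split => // q q_lt.
  rewrite nth_nseq q_lt mem_iota add0n (nth_map 0) ?size_iota // nth_iota // add0n.
  apply: (descend_Omega_lt w_in); rewrite size_low_bits; first by lia.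
  apply: (descend_Omega_lt w_in); rewrite size_low_bits -/n; first by lia.
  by case/Omega_ok: w_in => _ _; apply; lia.
rewrite -(size_iota 0 (k m)) -size_prod_lists_nseq -(size_allpairs pair) -/codes -(size_map decode).
apply: uniq_leq_size; first exact: undup_uniq.
by move=> _ /[!mem_undup] /mapP [w w_in ->]; rewrite factor map_f ?code_in.
Qed.

End Counting.

Local Open Scope R_scope.

Lemma RplusA : associative Rplus.
Proof. by move=> x y z; rewrite Rplus_assoc. Qed.

HB.instance Definition _ := Monoid.isComLaw.Build R R0 Rplus RplusA Rplus_comm Rplus_0_l.
HB.instance Definition _ := Monoid.isMulLaw.Build R R0 Rmult Rmult_0_l Rmult_0_r.
HB.instance Definition _ :=
  Monoid.isAddLaw.Build R Rmult Rplus Rmult_plus_distr_r Rmult_plus_distr_l.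

Lemma iter_Rplus n a : iter n (Rplus a) R0 = INR n * a.
Proof. by elim: n => [|n IH]; rewrite ?iterS ?IH ?S_INR /=; lra. Qed.

Lemma big_Rplus_const (T : Type) (s : seq T) a :
  \big[Rplus/R0]_(x <- s) a = INR (size s) * a.
Proof. by rewrite big_const_seq count_predT iter_Rplus. Qed.

Lemma ler_big_Rplus (T : eqType) (s : seq T) (F G : T -> R) :
  (forall x, x \in s -> F x <= G x) ->
  \big[Rplus/R0]_(x <- s) F x <= \big[Rplus/R0]_(x <- s) G x.
Proof.
move=> le_FG; rewrite big_seq [X in _ <= X]big_seq.
by apply: (big_ind2 Rle) => [|*|x /le_FG //]; lra.
Qed.

Lemma big_Rplus_undup (T : eqType) (s : seq T) (F : T -> R) :
  \big[Rplus/R0]_(x <- s) F x =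
  \big[Rplus/R0]_(v <- undup s) (INR (count_mem v s) * F v).
Proof.
rewrite -(perm_big _ (perm_count_undup s)) big_flatten big_map.
by apply: eq_bigr => v _; rewrite big_nseq iter_Rplus.
Qed.

Lemma ln_le_ln x y : 0 < x -> x <= y -> ln x <= ln y.
Proof. by move=> x_gt0 [lt_xy|->]; [left; exact: ln_increasing | right]. Qed.

Lemma ln_le_sub1 x : 0 < x -> ln x <= x - 1.
Proof. by move=> x_gt0; have := exp_ineq1_le (ln x); rewrite exp_ln //; lra. Qed.

(* [ln y <= y - 1] at [y = 1 / (p D)]. *)
Lemma neg_xlnx_le p D : 0 < p -> 0 < D -> p * - ln p <= p * ln D + / D - p.
Proof.
move=> p_gt0 D_gt0; have pD_gt0 : 0 < p * D by nra.
have := ln_le_sub1 (Rinv_0_lt_compat _ pD_gt0).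
rewrite ln_Rinv // ln_mult // => le_ln.
have : p * (- (ln p + ln D)) <= p * (/ (p * D) - 1) by apply: Rmult_le_compat_l; lra.
by rewrite Rinv_mult Rmult_minus_distr_l -Rmult_assoc Rinv_r; lra.
Qed.

Section Entropy.

Variables (A : eqType) (Om : seq outcome) (f : outcome -> A).
Hypothesis Om_gt0 : (0 < size Om)%N.

Let N := INR (size Om).
Let N_gt0 : 0 < N. Proof. exact/lt_0_INR/ltP. Qed.

Lemma entropy_big :
  entropy Om f = \big[Rplus/R0]_(w <- Om) (/ N * - ln (INR (count_mem (f w) (map f Om)) / N)).
Proof. by rewrite /entropy foldrE big_map; apply: eq_bigr => w _; rewrite count_map. Qed.

Lemma count_mem_gt0 w : w \in Om -> 0 < INR (count_mem (f w) (map f Om)).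
Proof. by move=> w_in; apply/lt_0_INR/ltP; rewrite -has_count has_pred1 map_f. Qed.

Lemma ln_le_entropy (K : nat) : (0 < K)%N ->
  (forall w, w \in Om -> (count (fun w' => f w' == f w) Om * K <= size Om)%N) ->
  ln (INR K) <= entropy Om f.
Proof.
move=> K_gt0 count_le; have K_gt0' : 0 < INR K by exact/lt_0_INR/ltP.
have -> : ln (INR K) = \big[Rplus/R0]_(w <- Om) (/ N * ln (INR K)).
  by rewrite big_Rplus_const -/N; field; lra.
rewrite entropy_big; apply: ler_big_Rplus => w w_in.
have c_gt0 := count_mem_gt0 w_in; set c := INR _ in c_gt0 *.
apply: Rmult_le_compat_l; first by left; apply: Rinv_0_lt_compat.
have cK_le : c * INR K <= N.
  by rewrite -mult_INR /c count_map; apply/le_INR/leP/count_le.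
rewrite -ln_Rinv ?Rinv_div; last exact: Rdiv_lt_0_compat.
apply: ln_le_ln => //; apply: (Rmult_le_reg_r c) => //.
by rewrite /Rdiv Rmult_assoc Rinv_l; lra.
Qed.

(* Gibbs' inequality against the uniform law on the range of [f]. *)
Lemma entropy_le_ln_range : entropy Om f <= ln (INR (size (undup (map f Om)))).
Proof.
set vals := undup (map f Om); set D := INR (size vals).
set c := fun v => INR (count_mem v (map f Om)).
have D_gt0 : 0 < D by exact/lt_0_INR/ltP/size_undup_map_gt0.
have sum_c : \big[Rplus/R0]_(v <- vals) c v = N.
  rewrite (eq_bigr (fun v => c v * 1)); last by move=> v _; rewrite Rmult_1_r.
  by rewrite -big_Rplus_undup big_Rplus_const size_map Rmult_1_r.
have -> : entropy Om f = \big[Rplus/R0]_(v <- map f Om) (/ N * - ln (c v / N)).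
  by rewrite entropy_big big_map.
rewrite big_Rplus_undup -/vals.
apply: Rle_trans (ler_big_Rplus (G := fun v => c v * (/ N * (ln D - 1)) + / D) _) _.
  move=> v; rewrite mem_undup => /mapP [w w_in ->].
  have := neg_xlnx_le (Rdiv_lt_0_compat _ _ (count_mem_gt0 w_in) N_gt0) D_gt0.
  by rewrite /Rdiv /c; lra.
rewrite big_split -big_distrl sum_c big_Rplus_const -/D /=; right; field; lra.
Qed.

End Entropy.

Lemma INR_expn (x t : nat) : INR (x ^ t)%N = INR x ^ t.
Proof. by elim: t => [|t IH]; rewrite ?expnS ?mult_INR ?IH. Qed.

Lemma pow2_gt0 t : 0 < 2 ^ t.
Proof. by apply: pow_lt; lra. Qed.

Lemma decreasing_cv_inf (u : nat -> R) (m : R) : Un_decreasing u -> (forall n, m <= u n) ->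
  exists h, is_inf (fun x => exists n, x = u n) h /\ Un_cv u h.
Proof.
move=> u_decr u_ge; have [h u_cv] : {h | Un_cv u h}.
  by apply: decreasing_cv u_decr _; exists (- m) => _ [n ->]; rewrite /opp_seq; have := u_ge n; lra.
exists h; split=> //; split=> [_ [n ->]|b b_le]; first exact: decreasing_ineq.
apply: Rnot_lt_le => lt_hb; have [N /(_ N (le_n N))] := u_cv (b - h) ltac:(lra).
by rewrite /R_dist => /Rabs_def2; have := b_le _ (ex_intro _ N erefl); lra.
Qed.

Lemma le_of_le_add_div_pow2 (b c x : R) : (forall t, b <= c / 2 ^ t + x) -> b <= x.
Proof.
move=> b_le; apply: Rnot_lt_le => lt_xb.
have [t lt_t] := INR_unbounded (c / (b - x)).
have lt_pow : INR t < 2 ^ t.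
  have : INR t < INR (2 ^ t)%N by apply/lt_INR/ltP/ltn_expl.
  by rewrite INR_expn.
have lt_c : c < 2 ^ t * (b - x).
  have : c / (b - x) * (b - x) < 2 ^ t * (b - x) by apply: Rmult_lt_compat_r; lra.
  by rewrite /Rdiv Rmult_assoc Rinv_l; lra.
have := b_le t; have := pow2_gt0 t; rewrite /Rdiv => pow_gt0.
have : c * / 2 ^ t < b - x.
  apply: (Rmult_lt_reg_r (2 ^ t)) => //; rewrite Rmult_assoc Rinv_l; lra.
lra.
Qed.

Section Rates.

Variable k : nat -> nat.
Hypothesis k_gt0 : forall n, (0 < k n)%N.
Hypothesis k_sq : forall n, (k n.+1 <= k n * k n)%N.

Definition rate l := ln (INR (k l)) / 2 ^ l.

Lemma INR_k_gt0 l : 0 < INR (k l).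
Proof. exact/lt_0_INR/ltP. Qed.

Lemma ln_k_ge0 l : 0 <= ln (INR (k l)).
Proof. by rewrite -ln_1; apply: ln_le_ln; last apply: (le_INR 1); [lra | apply/leP]. Qed.

Lemma rate_ge0 l : 0 <= rate l.
Proof. by apply: Rmult_le_pos; [exact: ln_k_ge0 | left; apply/Rinv_0_lt_compat/pow2_gt0]. Qed.

Lemma rate_decreasing : Un_decreasing rate.
Proof.
move=> l; have le_ln : ln (INR (k l.+1)) <= 2 * ln (INR (k l)).
  rewrite (_ : 2 * _ = ln (INR (k l)) + ln (INR (k l))); last by lra.
  rewrite -ln_mult -?mult_INR; try exact: INR_k_gt0.
  by apply: ln_le_ln; [exact: INR_k_gt0 | apply/le_INR/leP].
rewrite /rate /Rdiv (_ : 2 ^ l.+1 = 2 * 2 ^ l) // Rinv_mult.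
have := Rinv_0_lt_compat _ (pow2_gt0 l); nra.
Qed.

Lemma rate_le_H_block n j : (0 < j)%N -> rate n <= H_block k n j / 2 ^ n.
Proof.
move=> j_gt0; apply: Rmult_le_compat_r; first by left; apply/Rinv_0_lt_compat/pow2_gt0.
apply: ln_le_entropy (k_gt0 n) _ => [|w _]; first exact: size_Omega_gt0.
exact: count_Xblock_le.
Qed.

Lemma H_block_le m t j : (0 < j)%N ->
  H_block k (m + t) j <=
  ln (INR (size (prod_lists (level_lists k 0 m)))) + 2 ^ t * ln (INR (k m)).
Proof.
move=> j_gt0; apply: Rle_trans (entropy_le_ln_range _ (size_Omega_gt0 k_gt0 k_sq _)) _.
set S := size (prod_lists _); have S_gt0 : 0 < INR S by exact/lt_0_INR/ltP/(size_prod_level_lists_gt0 k_sq).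
have Spow_gt0 : 0 < INR S * INR (k m) ^ 2 ^ t.
  by apply: Rmult_lt_0_compat => //; apply: pow_lt; exact: INR_k_gt0.
apply: Rle_trans (ln_le_ln _ (le_INR _ _ (elimT leP (size_undup_Xblock_le k_gt0 m t j_gt0)))) _.
- exact/lt_0_INR/ltP/size_undup_map_gt0/size_Omega_gt0.
- rewrite mult_INR INR_expn ln_mult //; last by apply: pow_lt; exact: INR_k_gt0.
  by rewrite ln_pow ?INR_expn; [right | exact: INR_k_gt0].
Qed.

Lemma H_block_rate_le m t j : (0 < j)%N ->
  H_block k (m + t) j / 2 ^ (m + t) <=
  ln (INR (size (prod_lists (level_lists k 0 m)))) / 2 ^ t + rate m.
Proof.
move=> j_gt0; have := H_block_le m t j_gt0; set S := INR _ => H_le.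
have lnS_ge0 : 0 <= ln S.
  by rewrite -ln_1; apply: ln_le_ln; [lra | apply/(le_INR 1)/leP/size_prod_level_lists_gt0].
have pow_m_ge1 : 1 <= 2 ^ m by apply: pow_R1_Rle; lra.
have inv_m_gt0 : 0 < / 2 ^ m by apply/Rinv_0_lt_compat/pow2_gt0.
have inv_m_le1 : / 2 ^ m <= 1 by rewrite -Rinv_1; apply: Rinv_le_contravar; lra.
have inv_t_gt0 : 0 < / 2 ^ t by apply/Rinv_0_lt_compat/pow2_gt0.
rewrite /rate /Rdiv pow_add Rinv_mult.
apply: Rle_trans (Rmult_le_compat_r (/ 2 ^ m * / 2 ^ t) _ _ _ H_le) _; first nra.
rewrite (_ : (ln S + _ * _) * _ = ln S * / 2 ^ t * / 2 ^ m + ln (INR (k m)) * / 2 ^ m).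
  have : 0 <= ln S * / 2 ^ t by apply: Rmult_le_pos; lra.
  nra.
by field; split; apply: Rgt_not_eq; exact: pow2_gt0.
Qed.

End Rates.

Theorem proposition9 (k : nat -> nat)
  (kpos : forall n, (0 < k n)%N)
  (kmono : forall n, (k n <= k n.+1)%N)
  (ksq : forall n, (k n.+1 <= k n * k n)%N)
  (j : nat) (hj : (1 <= j)%N) :
  exists h : R,
    is_inf (fun x => exists l : nat, x = (ln (INR (k l)) / 2 ^ l)) h /\
    Un_cv (fun l => (ln (INR (k l)) / 2 ^ l)) h /\
    is_inf (fun x => exists n : nat, x = (H_block k n j / 2 ^ n)) h.
Proof.
have [h [[h_le h_greatest] h_cv]] := decreasing_cv_inf (rate_decreasing kpos ksq) (rate_ge0 kpos).
exists h; split; first by split.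
split=> //; split=> [_ [n ->]|b b_le].
  exact: Rle_trans (h_le _ (ex_intro _ n erefl)) (rate_le_H_block kpos ksq n hj).
apply: h_greatest => _ [m ->]; apply: le_of_le_add_div_pow2 => t.
exact: Rle_trans (b_le _ (ex_intro _ (m + t)%N erefl)) (H_block_rate_le kpos ksq m t hj).
Qed.
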